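(* For every integer $n\ge 6$, $q(K_{1,1,n-2}^+)>n+2-\frac{4}{n+2}$.
   Context: $q(G)$ denotes the largest eigenvalue of the signless Laplacian matrix $Q(G)=D(G)+A(G)$ of a graph $G$, where $A(G)$ is the adjacency matrix and $D(G)$ the diagonal degree matrix. $K_{1,1,n-2}$ is the complete tripartite graph with parts of sizes $1,1,n-2$, and $K_{1,1,n-2}^+$ is obtained from it by adding one edge inside the part of size $n-2$. *)

From HB Require Import structures.
From mathcomp Require Import all_boot all_order all_algebra.
Unset Printing Implicit Defensive.
Import Order.TTheory GRing.Theory Num.Theory.
Local Open Scope ring_scope.

(* A simple graph on vertex set 'I_n is a symmetric irreflexive rel. *)

(* K_{1,1,n-2}^+ on vertices 0..n-1: parts {0}, {1}, {2,...,n-1};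
   every pair of vertices in different parts is adjacent, and one extra
   edge {2,3} is added inside the part of size n-2. *)
Definition K11plus (n : nat) : rel 'I_n :=
  fun i j => (i != j) &&
    [|| (i < 2)%N, (j < 2)%N,
        (nat_of_ord i == 2%N) && (nat_of_ord j == 3%N)
      | (nat_of_ord i == 3%N) && (nat_of_ord j == 2%N)].

Definition adjmx (R : nzRingType) (n : nat) (e : rel 'I_n) : 'M[R]_n :=
  \matrix_(i, j) (e i j)%:R.

Definition degmx (R : nzRingType) (n : nat) (e : rel 'I_n) : 'M[R]_n :=
  \matrix_(i, j) (if i == j then (#|[set k | e i k]|)%:R else 0).

Definition signless_laplacian (R : nzRingType) (n : nat) (e : rel 'I_n)
  : 'M[R]_n := degmx R n e + adjmx R n e.

Definition is_largest_eigenvalue (R : realFieldType) (n : nat)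
  (A : 'M[R]_n) (l : R) : Prop :=
  eigenvalue A l /\ (forall m, eigenvalue A m -> m <= l).

From HB Require Import structures.
From mathcomp Require Import all_boot all_order all_algebra.
From mathcomp Require Import ring lra zify.
From mathcomp Require Import polyrcf.
Import Order.TTheory GRing.Theory Num.Theory.
Local Open Scope ring_scope.

(* Row vectors constant on the parts {0,1}, {2,3} and {4,...,n-1} of
   K_{1,1,n-2}^+ are mapped by Q to such vectors, Q acting on the three values
   through the quotient matrix [[n, 2, n-4], [2, 4, 0], [2, 0, 2]].  Every root
   of its characteristic polynomial p other than 2 and 4 is therefore an
   eigenvalue of Q.  Since p < 0 at n + 2 - 4/(n+2) and p(n+2) = 4n - 16 > 0,
   p has a root beyond n + 2 - 4/(n+2), and the largest eigenvalue of Q, which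
   exists because char_poly Q has finitely many roots, is at least that root. *)

Lemma mem_rootsR_char_poly (R : rcfType) (n : nat) (A : 'M[R]_n) (x : R) :
  (x \in rootsR (char_poly A)) = eigenvalue A x.
Proof.
by rewrite -roots_on_rootsR ?monic_neq0 ?char_poly_monic // eigenvalue_root_char.
Qed.

Lemma largest_eigenvalue_exists (R : rcfType) (n : nat) (A : 'M[R]_n) (m : R) :
  eigenvalue A m -> exists l, is_largest_eigenvalue R n A l.
Proof.
move=> eig_m; exists (\big[Order.max/m]_(x <- rootsR (char_poly A)) x); split.
  rewrite big_seq; apply: (big_ind (eigenvalue A)) => // [x y ? ?|x].
    by case: leP.
  by rewrite mem_rootsR_char_poly.
by move=> x eig_x; apply: le_bigmax_seq; rewrite ?mem_rootsR_char_poly.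
Qed.

Lemma mulmx_signless_laplacian (R : nzRingType) (n : nat) (e : rel 'I_n)
    (v : 'rV[R]_n) (j : 'I_n) :
  symmetric e ->
  (v *m signless_laplacian R n e) 0 j = \sum_(k | e j k) (v 0 j + v 0 k).
Proof.
move=> e_sym; rewrite !mxE; under eq_bigr => i _ do rewrite !mxE mulrDr.
rewrite !big_split /= (bigD1 j) //= eqxx big1 ?addr0; last first.
  by move=> i /negbTE ->; rewrite mulr0.
rewrite sumr_const cardsE mulr_natr; congr (_ + _).
rewrite [RHS]big_mkcond; apply: eq_bigr => k _.
by rewrite e_sym; case: (e j k); rewrite ?mulr1 ?mulr0.
Qed.

Definition K11plus_nat (i j : nat) : bool :=
  (i != j) && [|| (i < 2)%N, (j < 2)%N, (i == 2%N) && (j == 3%N)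
                | (i == 3%N) && (j == 2%N)].

Lemma K11plus_natE (n : nat) (i j : 'I_n) : K11plus n i j = K11plus_nat i j.
Proof. by []. Qed.

Lemma K11plus_sym (n : nat) : symmetric (K11plus n).
Proof.
move=> i j; rewrite !K11plus_natE /K11plus_nat eq_sym.
by case: (i < 2)%N (j < 2)%N (i == 2 :> nat) (j == 3 :> nat) (i == 3 :> nat)
  (j == 2 :> nat) => [] [] [] [] [] [].
Qed.

Lemma K11plus_nat_ge4 (i k : nat) : (4 <= k)%N -> K11plus_nat i k = (i < 2)%N.
Proof. by move=> k_ge4; rewrite /K11plus_nat; case: (ltnP i 2) => /= i_lt2; lia. Qed.

Definition block3 {R : Type} (a b c : R) (k : nat) : R :=
  if (k < 2)%N then a else if (k < 4)%N then b else c.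

Lemma K11plus_block3_mul (R : comNzRingType) (n : nat) (a b c : R) :
  (4 <= n)%N ->
  (\row_(j < n) block3 a b c j) *m signless_laplacian R n (K11plus n)
  = \row_(j < n) block3 (n%:R * a + 2 * b + (n%:R - 4) * c) (2 * a + 4 * b)
                        (2 * a + 2 * c) j.
Proof.
move=> n_ge4; apply/rowP => j.
rewrite mulmx_signless_laplacian ?mxE; last exact: K11plus_sym.
rewrite big_mkcond /=.
set F := fun k => if K11plus_nat j k then block3 a b c j + block3 a b c k else 0.
rewrite (eq_bigr (F \o val)) => [|k _]; last by rewrite /F !mxE K11plus_natE.
rewrite -(big_mkord xpredT F) (big_cat_nat (leq0n 4) n_ge4) /=.
rewrite [X in _ + X](eq_big_nat _ _
    (F2 := fun=> if (j < 2)%N then block3 a b c j + c else 0)); last first.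
  move=> k /andP[k_ge4 _]; rewrite /F K11plus_nat_ge4 // [block3 _ _ _ k]/block3.
  by have [-> ->] : (k < 2)%N = false /\ (k < 4)%N = false by lia.
rewrite sumr_const_nat -[_ *+ _]mulr_natr natrB // 4?big_ltn // big_geq // {}/F.
by case: j => [[|[|[|[|j]]]] ?]; rewrite /K11plus_nat /block3 /=; ring.
Qed.

Definition K11plus_quotient_poly {R : nzRingType} (N : R) : {poly R} :=
  ('X - N%:P) * ('X - 2%:P) * ('X - 4%:P) - 4%:P * ('X - 2%:P)
  - (2 * (N - 4))%:P * ('X - 4%:P).

Lemma K11plus_quotient_polyE (R : comNzRingType) (N x : R) :
  (K11plus_quotient_poly N).[x]
  = (x - N) * (x - 2) * (x - 4) - 4 * (x - 2) - 2 * (N - 4) * (x - 4).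
Proof. by rewrite !hornerE. Qed.

Lemma K11plus_eigenvalue (R : fieldType) (n : nat) (mu : R) :
  (4 <= n)%N -> root (K11plus_quotient_poly n%:R) mu -> mu != 2 -> mu != 4 ->
  eigenvalue (signless_laplacian R n (K11plus n)) mu.
Proof.
move=> n_ge4 /rootP; rewrite K11plus_quotient_polyE => p_mu mu_neq2 mu_neq4.
apply/eigenvalueP.
exists (\row_(j < n) block3 ((mu - 2) * (mu - 4)) (2 * (mu - 2)) (2 * (mu - 4)) j).
  rewrite K11plus_block3_mul //; apply/rowP => j; rewrite !mxE /block3.
  case: ifP => _; last by case: ifP => _; ring.
  by apply/eqP; rewrite eq_sym -subr_eq0 -p_mu; apply/eqP; ring.
apply/negP => /eqP /rowP /(_ (Ordinal (leq_trans (isT : 0 < 4)%N n_ge4))).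
by rewrite !mxE /block3 /=; apply/eqP; rewrite mulf_neq0 // subr_eq0.
Qed.

Lemma K11plus_quotient_root_gt (R : rcfType) (N : R) : 4 < N ->
  exists2 mu, root (K11plus_quotient_poly N) mu & 4 < N + 2 - 4 / (N + 2) < mu.
Proof.
move=> N_gt4; set p := K11plus_quotient_poly N; set t0 := N + 2 - 4 / (N + 2).
have /andP[frac_gt0 frac_lt1] : 0 < 4 / (N + 2) < 1.
  by rewrite divr_gt0 ?ltr_pdivrMr /=; lra.
have p_t0 : p.[t0] < 0.
  have -> : p.[t0] = - (8 * N ^+ 3 + 32 * N ^+ 2 + 96 * N + 192) / (N + 2) ^+ 3.
    by rewrite K11plus_quotient_polyE /t0; field; lra.
  rewrite mulNr oppr_lt0 divr_gt0 ?exprn_gt0 //; last by lra.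
  by rewrite !addr_gt0 ?mulr_gt0 ?exprn_gt0 //; lra.
have p_N2 : 0 < p.[N + 2] by rewrite K11plus_quotient_polyE; nra.
have t0_gt4 : 4 < t0 by rewrite /t0; lra.
have t0_le : t0 <= N + 2 by rewrite /t0; lra.
have p_sign : p.[t0] * p.[N + 2] < 0 by rewrite pmulr_llt0.
have [mu] := poly_ivtoo t0_le p_sign.
by rewrite in_itv /= => /andP[t0_lt_mu _] root_mu; exists mu; rewrite // t0_gt4.
Qed.

Theorem lemma2p8 (R : rcfType) (n : nat) :
  (6 <= n)%N ->
  (exists l, is_largest_eigenvalue R n (signless_laplacian R n (K11plus n)) l) /\
  (forall l : R, is_largest_eigenvalue R n (signless_laplacian R n (K11plus n)) l ->
     n%:R + 2 - 4 / (n%:R + 2) < l).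
Proof.
move=> n_ge6; have n_gt4 : 4 < n%:R :> R by rewrite ltr_nat; lia.
have [mu root_mu /andP[t0_gt4 t0_lt_mu]] := @K11plus_quotient_root_gt R n%:R n_gt4.
have eig_mu : eigenvalue (signless_laplacian R n (K11plus n)) mu.
  by apply: K11plus_eigenvalue; rewrite ?gt_eqF //; [lia | lra | lra].
split; first exact: largest_eigenvalue_exists eig_mu.
by move=> l [_ l_max]; apply: lt_le_trans t0_lt_mu (l_max _ eig_mu).
Qed.
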